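(* Let $n\ge 1$, $k\ge 1$ be integers, $V$ a complex vector space of dimension $2n+2$, $I$ a complex vector space of dimension $k$, and $(W,J)$ a complex symplectic vector space of dimension $2n+2k$. For $A\in\mathrm{Hom}(V^*\otimes I^*,W)$ let $A^t\colon W\to V\otimes I$ be the composition of $W\to W^*$, $w\mapsto J(w,\cdot)$, with the dual map $A^*\colon W^*\to V\otimes I$, and let $$\Delta_A=(\mathrm{id}_V\otimes\pi)\circ(A^t\otimes\mathrm{id}_{S^nI})\colon W\otimes S^nI\to V\otimes S^{n+1}I,$$ where $\pi\colon I\otimes S^nI\to S^{n+1}I$ is the natural multiplication map. (Both spaces have dimension $(2n+2k)\binom{k+n-1}{n}=(2n+2)\binom{k+n}{n+1}$.) Let $D(A)=\det\Delta_A$ (computed in any fixed bases). If $A$ is degenerate, i.e. there exist $0\neq v\in V^*$ and $0\neq i\in I^*$ with $A(v\otimes i)=0$, then $D(A)=0$. *)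

(* Complex numbers are modelled as R[i] = complex R for an
   arbitrary R : realType (so C = R[i] is the field of complex numbers). *)
From HB Require Import structures.
From mathcomp Require Import all_boot all_order all_algebra.
From mathcomp Require Import reals complex.
Set Implicit Arguments. Unset Strict Implicit. Unset Printing Implicit Defensive.
Import Order.TTheory GRing.Theory Num.Theory.
Local Open Scope ring_scope.

(* Monomial basis of S^d I, I = C^k: multi-indices alpha : 'I_k -> nat with
   |alpha| = d (each entry is bounded by d). *)
Definition mon (k d : nat) :=
  {f : {ffun 'I_k -> 'I_d.+1} | \sum_(i < k) (f i : nat) == d}.

Definition Jform (F : comNzRingType) (w : nat) (J : 'M[F]_w) (x y : 'rV[F]_w) : F :=
  (x *m J *m trmx y) 0 0.

(* A : Hom(Vdual (x) Idual, W) in the dual bases: A a b = A(ea^dual (x) fb^dual).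
   A^t(w) = sum_(a,b) J(w, A a b) e_a (x) f_b, and
   Delta_A (e_c (x) x^alpha) = sum_(a,b) J(e_c, A a b) e_a (x) x^(alpha + e_b).
   DeltaA c alpha a beta = coefficient of e_a (x) x^beta in Delta_A(e_c (x) x^alpha). *)
Definition DeltaA (F : comNzRingType) (m k w n : nat) (J : 'M[F]_w)
  (A : 'I_m -> 'I_k -> 'rV[F]_w)
  (r : 'I_w * mon k n) (c : 'I_m * mon k n.+1) : F :=
  \sum_(b < k)
    (([forall j : 'I_k, (val c.2 j : nat) == (val r.2 j : nat) + (j == b)])%:R
     * Jform J (delta_mx 0 r.1) (A c.1 b)).

Definition degenerate (F : comNzRingType) (m k w : nat)
  (A : 'I_m -> 'I_k -> 'rV[F]_w) : Prop :=
  exists (v : 'rV[F]_m) (i : 'rV[F]_k), v != 0 /\ i != 0 /\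
    \sum_(a < m) \sum_(b < k) (v 0 a * i 0 b) *: A a b = 0.

From HB Require Import structures.
From mathcomp Require Import all_boot all_order all_algebra.
From mathcomp Require Import reals complex.
From mathcomp Require Import ring.
Import Order.TTheory GRing.Theory Num.Theory.
Set Implicit Arguments. Unset Strict Implicit. Unset Printing Implicit Defensive.
Local Open Scope ring_scope.

(* If A(v (x) i) = 0, the column vector v (x) i^(n+1) of V (x) S^(n+1) I lies in
   the kernel of Delta_A: the row of e_c (x) x^alpha pairs it with
   i^alpha * J(e_c, A(v (x) i)) = 0, because the only monomials of degree n+1
   reached from x^alpha are the x^alpha * x_b. *)

HB.instance Definition _ (k d : nat) := Finite.copy (mon k d)
  {f : {ffun 'I_k -> 'I_d.+1} | \sum_(i < k) (f i : nat) == d}.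

Section Monomials.
Variable k : nat.

Fact mon_mulX_subproof d (al : mon k d) b j : (val al j + (j == b) < d.+2)%N.
Proof. by rewrite -addSn -[d.+2]addn1 leq_add ?leq_b1. Qed.

Fact mon_mulX_sum d (al : mon k d) b :
  \sum_(j < k) ([ffun j => Ordinal (mon_mulX_subproof al b j)] j : nat) == d.+1.
Proof.
under eq_bigr => j _ do rewrite ffunE /=.
rewrite big_split /= (eqP (valP al)) (bigD1 b) //= eqxx big1 => [|j /negbTE -> //].
by apply/eqP; rewrite addr0 addrC.
Qed.

Definition mon_mulX d (al : mon k d) b : mon k d.+1 :=
  exist (fun f : {ffun 'I_k -> 'I_d.+2} => \sum_(i < k) (f i : nat) == d.+1) _
    (mon_mulX_sum al b).

Lemma mon_mulXE d (al : mon k d) b j :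
  (val (mon_mulX al b) j : nat) = (val al j + (j == b))%N.
Proof. by rewrite ffunE. Qed.

Lemma mon_mulXP d (al : mon k d) b (be : mon k d.+1) :
  [forall j, (val be j : nat) == (val al j : nat) + (j == b)] = (be == mon_mulX al b).
Proof.
apply/forallP/eqP => [Hbe | ->]; last by move=> j; rewrite mon_mulXE.
by apply/val_inj/ffunP => j; apply/val_inj; rewrite /= mon_mulXE; apply/eqP.
Qed.

Fact mon_Xn_sum d (b : 'I_k) :
  \sum_(j < k) ([ffun j => if j == b then ord_max else ord0 : 'I_d.+1] j : nat) == d.
Proof.
rewrite (bigD1 b) //= ffunE eqxx big1 => [|j /negbTE]; last by rewrite ffunE => ->.
by rewrite addr0.
Qed.

Definition mon_Xn d b : mon k d :=
  exist (fun f : {ffun 'I_k -> 'I_d.+1} => \sum_(i < k) (f i : nat) == d) _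
    (mon_Xn_sum d b).

Variable R : comNzRingType.

Definition mon_eval d (v : 'rV[R]_k) (al : mon k d) : R :=
  \prod_(j < k) v 0 j ^+ (val al j : nat).

Lemma mon_eval_mulX d v (al : mon k d) b :
  mon_eval v (mon_mulX al b) = mon_eval v al * v 0 b.
Proof.
rewrite /mon_eval; under eq_bigr => j _ do rewrite mon_mulXE exprD.
rewrite big_split /=; congr (_ * _).
rewrite (bigD1 b) //= eqxx expr1 big1 ?mulr1 // => j /negbTE ->.
exact: expr0.
Qed.

Lemma mon_eval_Xn d v b : mon_eval v (mon_Xn d b) = v 0 b ^+ d.
Proof.
rewrite /mon_eval (bigD1 b) //= ffunE eqxx big1 ?mulr1 // => j /negbTE.
by rewrite ffunE => ->; rewrite expr0.
Qed.

End Monomials.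

Arguments mon_Xn {k} d b.

Section Jform.
Variables (R : comNzRingType) (w : nat) (J : 'M[R]_w) (x : 'rV[R]_w).

Lemma Jform0r : Jform J x 0 = 0.
Proof. by rewrite /Jform trmx0 mulmx0 mxE. Qed.

Lemma Jform_sumr (I : Type) (r : seq I) (P : pred I) (y : I -> 'rV[R]_w) :
  Jform J x (\sum_(i <- r | P i) y i) = \sum_(i <- r | P i) Jform J x (y i).
Proof. by rewrite /Jform raddf_sum mulmx_sumr summxE. Qed.

Lemma JformZr c y : Jform J x (c *: y) = c * Jform J x y.
Proof. by rewrite /Jform linearZ /= -scalemxAr mxE. Qed.

End Jform.

Section DeltaKernel.
Variables (R : comNzRingType) (m k w n : nat) (J : 'M[R]_w).
Variable A : 'I_m -> 'I_k -> 'rV[R]_w.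

Definition tensor_power (v : 'rV[R]_m) (i : 'rV[R]_k) d (c : 'I_m * mon k d) : R :=
  v 0 c.1 * mon_eval i c.2.

Lemma DeltaA_tensor_power (v : 'rV[R]_m) (i : 'rV[R]_k) (r : 'I_w * mon k n) :
  \sum_c DeltaA J A r c * tensor_power v i c =
  mon_eval i r.2 *
    Jform J (delta_mx 0 r.1) (\sum_(a < m) \sum_(b < k) (v 0 a * i 0 b) *: A a b).
Proof.
have -> : \sum_c DeltaA J A r c * tensor_power v i c =
    \sum_a \sum_be DeltaA J A r (a, be) * tensor_power v i (a, be).
  by rewrite pair_bigA; apply: eq_bigr => -[].
rewrite Jform_sumr big_distrr; apply: eq_bigr => a _ /=.
rewrite Jform_sumr big_distrr /=.
under eq_bigr => be _ do rewrite /DeltaA /= big_distrl /=.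
rewrite exchange_big; apply: eq_bigr => b _ /=.
under eq_bigr => be _ do rewrite mon_mulXP.
rewrite (bigD1 (mon_mulX r.2 b)) //= eqxx big1 ?addr0 => [|be /negbTE ->];
  last by rewrite !mul0r.
by rewrite /tensor_power JformZr mon_eval_mulX /=; ring.
Qed.

Lemma DeltaA_degenerate_kernel (v : 'rV[R]_m) (i : 'rV[R]_k) (r : 'I_w * mon k n) :
  \sum_(a < m) \sum_(b < k) (v 0 a * i 0 b) *: A a b = 0 ->
  \sum_c DeltaA J A r c * tensor_power v i c = 0.
Proof. by move=> hA; rewrite DeltaA_tensor_power hA Jform0r mulr0. Qed.

End DeltaKernel.

Lemma rowV_neq0P (R : nzRingType) (p : nat) (v : 'rV[R]_p) :
  v != 0 -> exists j, v 0 j != 0.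
Proof.
move=> v0; apply/existsP; apply: contraR v0 => /existsPn v_eq0.
by apply/eqP/rowP => j; rewrite !mxE; apply/eqP/negbNE/v_eq0.
Qed.

Lemma det_DeltaA_degenerate (R : idomainType) m k w n (J : 'M[R]_w)
    (A : 'I_m -> 'I_k -> 'rV[R]_w) N (eR : 'I_N -> 'I_w * mon k n)
    (eC : 'I_N -> 'I_m * mon k n.+1) :
  bijective eC -> degenerate A ->
  \det (\matrix_(p < N, q < N) DeltaA J A (eR p) (eC q)) = 0.
Proof.
move=> heC [v [i [v0 [i0 hA]]]]; have [eC' _ eC'K] := heC.
pose y := \row_q tensor_power v i (eC q).
have [a va0] := rowV_neq0P v0; have [b ib0] := rowV_neq0P i0.
have y0 : y 0 (eC' (a, mon_Xn n.+1 b)) != 0.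
  by rewrite mxE eC'K /tensor_power mon_eval_Xn mulf_neq0 ?expf_neq0.
apply/eqP; rewrite -det_tr; apply/det0P; exists y.
  by apply: contraNneq y0 => ->; rewrite mxE.
apply/rowP => p; rewrite !mxE.
transitivity (\sum_c DeltaA J A (eR p) c * tensor_power v i c).
  rewrite (reindex eC); last exact: onW_bij.
  by apply: eq_bigr => q _; rewrite !mxE mulrC.
exact: DeltaA_degenerate_kernel.
Qed.

Theorem mainTheorem2 (R : realType) (n k : nat) (hn : (1 <= n)%N) (hk : (1 <= k)%N)
  (J : 'M[R[i]]_(2 * n + 2 * k))
  (hJskew : trmx J = - J) (hJnd : J \in unitmx)
  (A : 'I_(2 * n + 2) -> 'I_k -> 'rV[R[i]]_(2 * n + 2 * k))
  (N : nat) (eR : 'I_N -> 'I_(2 * n + 2 * k) * mon k n)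
  (eC : 'I_N -> 'I_(2 * n + 2) * mon k n.+1)
  (heR : bijective eR) (heC : bijective eC) :
  degenerate A ->
  \det (\matrix_(p < N, q < N) DeltaA J A (eR p) (eC q)) = 0.
Proof. exact: det_DeltaA_degenerate. Qed.
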